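(* For integers $s,t\ge0$ and real polynomials $f,g$, let $$\langle f(x),g(y)\rangle_{s,t}=\int_{(0,1)\times(0,1)}\frac{x^sy^s}{x+y}f(x)g(y)\left(\frac{1-x}{1+x}\right)^t\left(\frac{1-y}{1+y}\right)^tdx\,dy,\qquad \mathcal L_{s,t}(f)=\sqrt2\int_0^1\frac{x^s}{1+x}f(x)\left(\frac{1-x}{1+x}\right)^tdx.$$ Then for all $s,t\ge0$ and all polynomials $f,g$: (1) $\langle f(x),g(y)\rangle_{s+1,t}=\langle xf(x),yg(y)\rangle_{s,t}$; (2) $\langle f(x),g(y)\rangle_{s,t+1}=\langle f(x),g(y)\rangle_{s,t}-\mathcal L_{s,t}(f)\,\mathcal L_{s,t}(g)$. *)

From HB Require Import structures.
From mathcomp Require Import all_boot all_order all_algebra.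
From mathcomp Require Import all_classical all_reals all_analysis.
Set Implicit Arguments. Unset Strict Implicit. Unset Printing Implicit Defensive.
Import Order.TTheory GRing.Theory Num.Theory.
Local Open Scope classical_set_scope.
Local Open Scope ring_scope.

Definition wgt (R : realType) (t : nat) (x : R) : R := ((1 - x) / (1 + x)) ^+ t.

Definition ipst (R : realType) (s t : nat) (f g : {poly R}) : R :=
  Rintegral ((@lebesgue_measure R) \x (@lebesgue_measure R))%E
    (`]0, 1[%classic `*` `]0, 1[%classic)
    (fun z : R * R => z.1 ^+ s * z.2 ^+ s / (z.1 + z.2) * f.[z.1] * g.[z.2]
                      * wgt t z.1 * wgt t z.2).

Definition Lst (R : realType) (s t : nat) (f : {poly R}) : R :=
  Num.sqrt 2 * Rintegral (@lebesgue_measure R) `]0, 1[%classic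
    (fun x : R => x ^+ s / (1 + x) * f.[x] * wgt t x).

(* Identity (1) holds pointwise under the integral.  For (2), on the unit square
   (1 - x)(1 - y) = (1 + x)(1 + y) - 2(x + y), so the integrand of <f,g>_{s,t+1}
   is that of <f,g>_{s,t} minus 2 phi_f(x) phi_g(y), where sqrt 2 * phi_p is the
   integrand of L_{s,t}(p); Fubini turns the integral of the product into
   L_{s,t}(f) L_{s,t}(g) / 2.  Splitting the integral is legitimate because all
   integrands are dominated by a multiple of 1/(x + y), which is integrable on
   (0,1)^2: it is bounded by sum_n 2^(n+1) 1_{(0,2^-n)^2}, whose integral is
   sum_n 2^(n+1) 4^-n = 4. *)

From HB Require Import structures.
From mathcomp Require Import all_boot all_order all_algebra.
From mathcomp Require Import all_classical all_reals all_analysis.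
From mathcomp Require Import measurable_realfun.
From mathcomp Require Import ring lra.
Set Implicit Arguments. Unset Strict Implicit. Unset Printing Implicit Defensive.
Import Order.TTheory GRing.Theory Num.Theory numFieldNormedType.Exports.
Local Open Scope classical_set_scope.
Local Open Scope ring_scope.

Local Notation unit_interval R := (`]0, 1[%classic : set (measurableTypeR R)).
Local Notation unit_square R := (unit_interval R `*` unit_interval R).

Lemma measurable_funV_gt0 d (T : measurableType d) (R : realType) (D : set T)
    (g : T -> R) :
  measurable D -> measurable_fun D g -> (forall x, D x -> 0 < g x) ->
  measurable_fun D (fun x => (g x)^-1).
Proof.
move=> mD mg g_gt0.
have minv : measurable_fun (`]0, +oo[%classic : set R) GRing.inv.
  apply: open_continuous_measurable_fun; first exact: interval_open.
  move=> x; rewrite inE /= in_itv /= andbT => x_gt0.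
  by apply: inv_continuous; rewrite gt_eqF.
apply: (measurable_comp _ _ minv mg) => //.
by move=> _ [x Dx <-]; rewrite /= in_itv /= andbT g_gt0.
Qed.

Lemma measurable_fun_setX_fst d1 d2 d3 (T1 : measurableType d1)
    (T2 : measurableType d2) (T3 : measurableType d3) (A : set T1) (B : set T2)
    (h : T1 -> T3) :
  measurable A -> measurable_fun A h -> measurable_fun (A `*` B) (h \o fst).
Proof.
move=> mA mh; apply: (measurable_comp mA _ mh) => //.
- by move=> _ [z [Az _] <-].
- exact: measurable_funS measurable_fst.
Qed.

Lemma measurable_fun_setX_snd d1 d2 d3 (T1 : measurableType d1)
    (T2 : measurableType d2) (T3 : measurableType d3) (A : set T1) (B : set T2)
    (h : T2 -> T3) :
  measurable B -> measurable_fun B h -> measurable_fun (A `*` B) (h \o snd).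
Proof.
move=> mB mh; apply: (measurable_comp mB _ mh) => //.
- by move=> _ [z [_ Bz] <-].
- exact: measurable_funS measurable_snd.
Qed.

Lemma measurable_horner (R : realType) (p : {poly R}) (D : set R) :
  measurable_fun D (horner p).
Proof.
apply: (measurable_funS (E := setT)) => //.
apply: continuous_measurable_fun; exact: continuous_horner.
Qed.

Section integral_mul_setX.
Context d1 d2 (T1 : measurableType d1) (T2 : measurableType d2) (R : realType).
Variables (mu : {sigma_finite_measure set T1 -> \bar R})
  (nu : {sigma_finite_measure set T2 -> \bar R}).
Variables (A : set T1) (B : set T2) (u : T1 -> R) (v : T2 -> R).
Hypotheses (mA : measurable A) (mB : measurable B).
Hypotheses (iu : mu.-integrable A (EFin \o u)) (iv : nu.-integrable B (EFin \o v)).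

Lemma patch_mul_setX :
  (fun z : T1 * T2 => u z.1 * v z.2) \_ (A `*` B) =
  (fun z => (u \_ A) z.1 * (v \_ B) z.2).
Proof.
apply/funext => -[x y]; rewrite !patchE in_setX /=.
by case: (x \in A); case: (y \in B); rewrite ?mulr0 ?mul0r.
Qed.

Let iuT : mu.-integrable setT (EFin \o u \_ A).
Proof. by rewrite -restrict_EFin; exact/(integrable_mkcond _ mA). Qed.

Let ivT : nu.-integrable setT (EFin \o v \_ B).
Proof. by rewrite -restrict_EFin; exact/(integrable_mkcond _ mB). Qed.

Let integrable_mul_patch :
  (mu \x nu)%E.-integrable setT (EFin \o fun z => (u \_ A) z.1 * (v \_ B) z.2).
Proof.
have /integrableP[/measurable_EFinP mu' int_absEu_lty] := iuT.
have /integrableP[/measurable_EFinP mv' int_absEv_lty] := ivT.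
have m_absu : measurable_fun setT (fun x => `|(u \_ A) x|%:E).
  by apply/measurable_EFinP; exact: measurableT_comp.
have m_absv : measurable_fun setT (fun y => `|(v \_ B) y|%:E).
  by apply/measurable_EFinP; exact: measurableT_comp.
apply/integrable12ltyP.
  apply/measurable_EFinP/measurable_funM.
    exact: measurableT_comp mu' measurable_fst.
  exact: measurableT_comp mv' measurable_snd.
under eq_integral => x _.
  under eq_integral => y _ do rewrite /= normrM EFinM.
  rewrite ge0_integralZl //.
  over.
have int_absv_ge0 : (0 <= \int[nu]_y `|(v \_ B) y|%:E)%E.
  by apply: integral_ge0 => y _; rewrite lee_fin.
rewrite /= ge0_integralZr //.
have int_absu_ge0 : (0 <= \int[mu]_x `|(u \_ A) x|%:E)%E.
  by apply: integral_ge0 => x _; rewrite lee_fin.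
have int_absu_lty : (\int[mu]_x `|(u \_ A) x|%:E < +oo)%E.
  by under eq_integral do rewrite -abse_EFin.
have int_absv_lty : (\int[nu]_y `|(v \_ B) y|%:E < +oo)%E.
  by under eq_integral do rewrite -abse_EFin.
by rewrite lte_mul_pinfty // ge0_fin_numE.
Qed.

Lemma integrable_mul_setX :
  (mu \x nu)%E.-integrable (A `*` B) (EFin \o fun z => u z.1 * v z.2).
Proof.
apply/integrable_mkcond; first exact: measurableX.
by rewrite restrict_EFin patch_mul_setX.
Qed.

Lemma Rintegral_mul_setX :
  \int[(mu \x nu)%E]_(z in A `*` B) (u z.1 * v z.2) =
  \int[mu]_(x in A) u x * \int[nu]_(y in B) v y.
Proof.
rewrite [LHS]Rintegral_mkcond (Rintegral_mkcond _ A) (Rintegral_mkcond _ B).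
rewrite patch_mul_setX /Rintegral.
rewrite -(integral12_prod_meas1 integrable_mul_patch) /fubini_F.
have u_fin := integrable_fin_num measurableT iuT.
have v_fin := integrable_fin_num measurableT ivT.
have inner (x : T1) :
    (\int[nu]_y (EFin \o fun z => (u \_ A) z.1 * (v \_ B) z.2)%R (x, y)
    = ((u \_ A) x)%:E * (fine (\int[nu]_y ((v \_ B) y)%:E))%:E)%E.
  rewrite fineK // -(integralZl measurableT ivT).
  by apply: eq_integral => y _; rewrite /= EFinM.
rewrite (eq_integral _ _ (fun x _ => inner x)) integralZr //.
by rewrite fineM.
Qed.

End integral_mul_setX.

Lemma exists_exprN2_le (R : archiRealFieldType) (e : R) :
  0 < e -> exists n, 2 ^- n <= e.
Proof.
move=> e_gt0; have /archi_boundP eVlt : 0 <= e^-1 by rewrite invr_ge0 ltW.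
exists (Num.bound e^-1); rewrite -[leRHS]invrK lef_pV2 ?posrE ?exprn_gt0 ?invr_gt0 //.
apply: (le_trans (ltW eVlt)); rewrite -natrX ler_nat.
exact/ltnW/ltn_expl.
Qed.

Lemma inv_addr_le_dyadic (R : archiRealFieldType) (x y : R) :
  0 < x < 1 -> 0 < y < 1 ->
  exists n, [/\ x < 2 ^- n, y < 2 ^- n & (x + y)^-1 <= 2 ^+ n.+1].
Proof.
move=> /andP[x_gt0 x_lt1] /andP[y_gt0 y_lt1].
(* n is the last index with x, y < 2^-n, so that 2^-(n+1) <= x + y. *)
have [N] := exists_exprN2_le (addr_gt0 x_gt0 y_gt0).
elim: N => [|N IHN] le_xy.
  exists 0%N; rewrite expr0 invr1; split=> //.
  rewrite expr0 invr1 in le_xy.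
  by apply: le_trans (_ : 1 <= 2); rewrite ?invf_le1 ?addr_gt0 // ler1n.
have [/andP[xN yN]|] := boolP ((x < 2 ^- N) && (y < 2 ^- N)).
  exists N; split=> //.
  by rewrite -[leRHS]invrK lef_pV2 ?posrE ?invr_gt0 ?exprn_gt0 ?addr_gt0.
rewrite negb_and -!leNgt => xyN; apply: IHN.
by case/orP: xyN; lra.
Qed.

Lemma lebesgue_measure_square (R : realType) (a : R) : 0 < a ->
  ((@lebesgue_measure R) \x (@lebesgue_measure R))%E (`]0, a[ `*` `]0, a[)
  = (a ^+ 2)%:E.
Proof.
move=> a_gt0; rewrite product_measure1E //= lebesgue_measure_itv /= lte_fin a_gt0.
by rewrite sube0 -EFinM.
Qed.

Definition dyadic_square (R : realType) (n : nat) :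
  set (measurableTypeR R * measurableTypeR R) := `]0, 2 ^- n[ `*` `]0, 2 ^- n[.
Arguments dyadic_square : clear implicits.

Lemma dyadic_square_sub (R : realType) (n : nat) :
  dyadic_square R n `<=` unit_square R.
Proof.
have n_le1 : 2 ^- n <= 1 :> R by rewrite invf_le1 ?exprn_ege1 ?exprn_gt0 // ler1n.
move=> [x y] [/=]; rewrite /= !in_itv /= => /andP[x_gt0 xn] /andP[y_gt0 yn].
by split; apply/andP; split => //; apply: lt_le_trans n_le1.
Qed.

Lemma inv_addr_le_dyadic_series (R : realType) (x y : R) :
  0 < x < 1 -> 0 < y < 1 ->
  (((x + y)^-1)%:E <=
   \sum_(n <oo) (2 ^+ n.+1 * \1_(dyadic_square R n) (x, y))%:E)%E.
Proof.
move=> x01 y01; have [[x_gt0 _] [y_gt0 _]] := (andP x01, andP y01).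
have [n [xn yn le_n]] := inv_addr_le_dyadic x01 y01.
have term_ge0 k : (0 <= (2 ^+ k.+1 * \1_(dyadic_square R k) (x, y))%:E)%E.
  by rewrite lee_fin mulr_ge0 ?exprn_ge0.
rewrite (nneseriesD1 (n := n)) //.
apply: le_trans (leeDl _ _); last by apply: nneseries_ge0 => k _ _.
rewrite indicE mem_set /=; last by split; rewrite /= in_itv /= ?x_gt0 ?y_gt0.
by rewrite mulr1 lee_fin.
Qed.

Lemma integral_dyadic_square (R : realType) (n : nat) :
  (\int[@lebesgue_measure R \x @lebesgue_measure R]_(z in unit_square R)
     (2 ^+ n.+1 * \1_(dyadic_square R n) z)%:E)%E = (4 / (2 ^ (n + 1))%:R)%:E.
Proof.
under eq_integral do rewrite EFinM.
rewrite ge0_integralZl_EFin ?exprn_ge0 //; last first.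
- by apply/measurable_EFinP/measurable_indic; exact: measurableX.
- exact: measurableX.
rewrite integral_indic ?setIidl; [|exact: dyadic_square_sub|exact: measurableX..].
set measure_square := (X in (_ * X)%E).
have -> : measure_square = ((2 ^- n) ^+ 2)%:E.
  by apply: lebesgue_measure_square; rewrite invr_gt0 exprn_gt0.
rewrite -EFinM natrX addn1 !exprS; congr EFin.
by field; rewrite expf_neq0.
Qed.

Lemma measurable_inv_addr_unit_square (R : realType) :
  measurable_fun (unit_square R) (fun z => (z.1 + z.2)^-1).
Proof.
apply: measurable_funV_gt0; first exact: measurableX.
  apply: (measurable_funS measurableT) => //.
  by apply: measurable_funD; [exact: measurable_fst | exact: measurable_snd].
by move=> [x y] [/=]; rewrite !in_itv /= => /andP[x_gt0 _] /andP[y_gt0 _]; lra.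
Qed.

Lemma integrable_inv_addr_unit_square (R : realType) :
  ((@lebesgue_measure R) \x (@lebesgue_measure R))%E.-integrable
    (unit_square R) (EFin \o fun z => (z.1 + z.2)^-1).
Proof.
set mu := @lebesgue_measure R; set D := unit_square R.
have mD : measurable D by apply: measurableX.
pose t n z := ((2 ^+ n.+1 : R) * \1_(dyadic_square R n) z)%:E.
have t_ge0 n z : (0 <= t n z)%E by rewrite lee_fin mulr_ge0 // exprn_ge0.
have mt n : measurable_fun D (t n).
  apply/measurable_EFinP/measurable_funM => //.
  by apply: measurable_indic; apply: measurableX.
have mk := @measurable_inv_addr_unit_square R.
apply/integrableP; split; first exact/measurable_EFinP.
apply: (le_lt_trans (y := (\int[mu \x mu]_(z in D) \sum_(n <oo) t n z)%E)).
  apply: ge0_le_integral => //.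
  - by apply: measurableT_comp => //; exact/measurable_EFinP.
  - by apply: (ge0_emeasurable_sum (P := predT)) => [n z _ _|n _];
      [exact: t_ge0 | exact: mt].
  move=> [x y] [/=]; rewrite !in_itv /= => x01 y01.
  have [[x_gt0 _] [y_gt0 _]] := (andP x01, andP y01).
  rewrite /= ger0_norm; first exact: inv_addr_le_dyadic_series.
  by rewrite invr_ge0 ltW // addr_gt0.
rewrite integral_nneseries // (eq_eseriesr (fun n _ => integral_dyadic_square R n)).
by move/cvg_lim: (@cvg_geometric_eseries_half R 4 0) => -> //; exact: ltry.
Qed.

Lemma measurable_wgt (R : realType) (t : nat) :
  measurable_fun (unit_interval R) (wgt t).
Proof.
apply/measurable_funX/measurable_funM; first exact: measurable_funB.
apply: measurable_funV_gt0 => //; first exact: measurable_funD.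
by move=> x /=; rewrite in_itv /= => /andP[x_gt0 _]; lra.
Qed.

Lemma normr_horner_le (R : realType) (p : {poly R}) (x : R) :
  0 <= x <= 1 -> `|p.[x]| <= \sum_(i < size p) `|p`_i|.
Proof.
move=> /andP[x_ge0 x_le1]; rewrite horner_coef.
apply: (le_trans (ler_norm_sum _ _ _)); apply: ler_sum => i _.
rewrite normrM normrX (ger0_norm x_ge0) -[leRHS]mulr1 ler_wpM2l //.
exact: exprn_ile1.
Qed.

Lemma wgt_ge0_le1 (R : realType) (t : nat) (x : R) :
  0 <= x <= 1 -> 0 <= wgt t x <= 1.
Proof.
move=> /andP[x_ge0 x_le1].
have r_ge0 : 0 <= (1 - x) / (1 + x) by apply: divr_ge0; lra.
have r_le1 : (1 - x) / (1 + x) <= 1 by rewrite ler_pdivrMr; lra.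
by rewrite exprn_ge0 // exprn_ile1.
Qed.

Definition weighted_horner (R : realType) (s t : nat) (p : {poly R}) (x : R) : R :=
  x ^+ s * p.[x] * wgt t x.

Definition Lst_integrand (R : realType) (s t : nat) (p : {poly R}) (x : R) : R :=
  x ^+ s / (1 + x) * p.[x] * wgt t x.

Lemma Lst_integrandE (R : realType) (s t : nat) (p : {poly R}) :
  Lst_integrand s t p = fun x => weighted_horner s t p x / (1 + x).
Proof. by apply/funext => x; rewrite /Lst_integrand /weighted_horner; ring. Qed.

Lemma measurable_weighted_horner (R : realType) (s t : nat) (p : {poly R}) :
  measurable_fun (unit_interval R) (weighted_horner s t p).
Proof.
apply: measurable_funM; last exact: measurable_wgt.
by apply: measurable_funM; [exact: measurable_funX | exact: measurable_horner].
Qed.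

Lemma normr_weighted_horner_le (R : realType) (s t : nat) (p : {poly R}) (x : R) :
  0 <= x <= 1 -> `|weighted_horner s t p x| <= \sum_(i < size p) `|p`_i|.
Proof.
move=> x01; have /andP[x_ge0 x_le1] := x01.
have /andP[w_ge0 w_le1] := wgt_ge0_le1 t x01.
rewrite !normrM ger0_norm ?exprn_ge0 // (ger0_norm w_ge0).
rewrite -[leRHS]mul1r -[leRHS]mulr1.
apply: ler_pM => //; first by rewrite mulr_ge0 ?exprn_ge0.
by apply: ler_pM; rewrite ?exprn_ge0 ?exprn_ile1 ?normr_horner_le.
Qed.

Lemma integrable_Lst_integrand (R : realType) (s t : nat) (p : {poly R}) :
  (@lebesgue_measure R).-integrable (unit_interval R) (EFin \o Lst_integrand s t p).
Proof.
apply: measurable_bounded_integrable => //.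
- by rewrite /= lebesgue_measure_itv /= lte_fin ltr01 sube0 ltry.
- rewrite Lst_integrandE; apply: measurable_funM.
    exact: measurable_weighted_horner.
  apply: measurable_funV_gt0 => //; first exact: measurable_funD.
  by move=> x /=; rewrite in_itv /= => /andP[x_gt0 _]; lra.
exists (\sum_(i < size p) `|p`_i|); split; first exact: num_real.
move=> M M_gt x; rewrite /= in_itv /= => /andP[x_gt0 x_lt1].
apply: le_trans (ltW M_gt); rewrite Lst_integrandE normrM -[leRHS]mulr1.
apply: ler_pM => //; first by apply: normr_weighted_horner_le; rewrite !ltW.
by rewrite ger0_norm ?invr_ge0 ?invf_le1; lra.
Qed.

Definition ipst_integrand (R : realType) (s t : nat) (f g : {poly R}) (z : R * R) : R :=
  z.1 ^+ s * z.2 ^+ s / (z.1 + z.2) * f.[z.1] * g.[z.2] * wgt t z.1 * wgt t z.2.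

Lemma ipst_integrandE (R : realType) (s t : nat) (f g : {poly R}) :
  ipst_integrand s t f g =
  fun z => weighted_horner s t f z.1 * weighted_horner s t g z.2 * (z.1 + z.2)^-1.
Proof. by apply/funext => z; rewrite /ipst_integrand /weighted_horner; ring. Qed.

Lemma integrable_ipst_integrand (R : realType) (s t : nat) (f g : {poly R}) :
  ((@lebesgue_measure R) \x (@lebesgue_measure R))%E.-integrable
    (unit_square R) (EFin \o ipst_integrand s t f g).
Proof.
have mD : measurable (unit_square R) by exact: measurableX.
have Mf_ge0 : 0 <= \sum_(i < size f) `|f`_i| by apply: sumr_ge0.
have Mg_ge0 : 0 <= \sum_(i < size g) `|g`_i| by apply: sumr_ge0.
set M := (\sum_(i < size f) `|f`_i|) * (\sum_(i < size g) `|g`_i|).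
apply: (le_integrable mD _ _ (integrableZl mD M (integrable_inv_addr_unit_square R))).
  rewrite ipst_integrandE; apply/measurable_EFinP/measurable_funM.
    apply: measurable_funM.
      by apply: measurable_fun_setX_fst => //; exact: measurable_weighted_horner.
    by apply: measurable_fun_setX_snd => //; exact: measurable_weighted_horner.
  exact: measurable_inv_addr_unit_square.
move=> [x y] [/=]; rewrite !in_itv /= => /andP[x_gt0 x_lt1] /andP[y_gt0 y_lt1].
have xy_ge0 : 0 <= (x + y)^-1 by rewrite invr_ge0 addr_ge0 ?ltW.
rewrite lee_fin [leRHS]ger0_norm ?mulr_ge0 //.
rewrite ipst_integrandE 2!normrM (ger0_norm xy_ge0) ler_wpM2r //.
have [x01 y01] : 0 <= x <= 1 /\ 0 <= y <= 1 by rewrite !ltW.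
by rewrite /= ler_pM ?normr_ge0 ?normr_weighted_horner_le.
Qed.

Lemma ipstE (R : realType) (s t : nat) (f g : {poly R}) :
  ipst s t f g =
  \int[(@lebesgue_measure R \x @lebesgue_measure R)%E]_(z in unit_square R)
    ipst_integrand s t f g z.
Proof. by []. Qed.

Lemma LstE (R : realType) (s t : nat) (p : {poly R}) :
  Lst s t p =
  Num.sqrt 2 * \int[@lebesgue_measure R]_(x in unit_interval R) Lst_integrand s t p x.
Proof. by []. Qed.

Lemma ipstS_mulX (R : realType) (s t : nat) (f g : {poly R}) :
  ipst s.+1 t f g = ipst s t ('X * f) ('X * g).
Proof.
rewrite !ipstE; apply: eq_Rintegral => z _.
by rewrite /ipst_integrand !hornerM !hornerX !exprS; ring.
Qed.

Lemma ipst_integrand_wgtS (R : realType) (s t : nat) (f g : {poly R}) :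
  {in unit_square R, ipst_integrand s t.+1 f g =1 fun z =>
    ipst_integrand s t f g z - 2 * (Lst_integrand s t f z.1 * Lst_integrand s t g z.2)}.
Proof.
move=> [x y] /set_mem [/=]; rewrite !in_itv /= => /andP[x_gt0 _] /andP[y_gt0 _].
have [xy_neq0 x1_neq0 y1_neq0] : [/\ x + y != 0, 1 + x != 0 & 1 + y != 0].
  by split; rewrite gt_eqF // addr_gt0.
rewrite /ipst_integrand /Lst_integrand /wgt /= !exprSr.
by field; rewrite xy_neq0 x1_neq0 y1_neq0.
Qed.

Lemma ipst_wgtS (R : realType) (s t : nat) (f g : {poly R}) :
  ipst s t.+1 f g = ipst s t f g - Lst s t f * Lst s t g.
Proof.
have mI : measurable (unit_interval R) by [].
have mD : measurable (unit_square R) by exact: measurableX.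
have iLf := integrable_Lst_integrand s t f.
have iLg := integrable_Lst_integrand s t g.
have iL := integrable_mul_setX mI mI iLf iLg.
have i2L : ((@lebesgue_measure R) \x (@lebesgue_measure R))%E.-integrable
    (unit_square R)
    (EFin \o fun z => 2 * (Lst_integrand s t f z.1 * Lst_integrand s t g z.2)).
  by apply: (eq_integrable mD _ _ _ (integrableZl mD 2 iL)) => z _; rewrite /= EFinM.
rewrite !ipstE !LstE (eq_Rintegral _ (@ipst_integrand_wgtS R s t f g)).
rewrite RintegralB //; last exact: integrable_ipst_integrand.
rewrite RintegralZl // (Rintegral_mul_setX mI mI iLf iLg).
by rewrite mulrACA -expr2 sqr_sqrtr ?ler0n.
Qed.

Theorem proposition2p2 (R : realType) (s t : nat) (f g : {poly R}) :
  ipst (s.+1) t f g = ipst s t ('X * f) ('X * g) /\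
  ipst s (t.+1) f g = ipst s t f g - Lst s t f * Lst s t g.
Proof. by split; [exact: ipstS_mulX | exact: ipst_wgtS]. Qed.
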